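(* Let $f\colon A\to X$ and $g\colon B\to Y$ be monomorphisms in $\mathsf{cSet}^+$, and let $\odot$ be either $\otimes$ or $\circledast$. Then: (1) if both $f$ and $g$ are regular, then $f\hat\odot g$ is regular; (2) if either $f$ or $g$ is entire, then $f\hat\odot g$ is entire; (3) if both $f$ and $g$ are entire, then $f\hat\odot g$ is an isomorphism; (4) if either $f$ or $g$ is entire, then the commutative square with top map $(A\otimes Y)\cup_{A\otimes B}(X\otimes B)\to(A\circledast Y)\cup_{A\circledast B}(X\circledast B)$ induced by $\mu$, left map $f\hat\otimes g$, right map $f\hat\circledast g$, and bottom map $\mu_{X,Y}\colon X\otimes Y\to X\circledast Y$, is a pushout in $\mathsf{cSet}^+$.
   Context: The box category $\square$ is the subcategory of posets with objects $[1]^n=\{0<1\}^n$ and morphisms generated by faces $\partial_{i,\varepsilon}$ (insert $\varepsilon$ as $i$-th coordinate), degeneracies $\sigma_i$ (delete $i$-th coordinate) and connections $\gamma_{i,1},\gamma_{i,0}$ (replace $x_i,x_{i+1}$ by their max, resp. min). Cubical sets are presheaves on $\square$, operators act on the right, and a cube is degenerate if of the form $x\sigma_i$ or $x\gamma_{i,\varepsilon}$. The geometric product $\otimes$ on cubical sets is the Day convolution of $[1]^m\otimes[1]^n=[1]^{m+n}$; every non-degenerate cube of $X\otimes Y$ is $x\otimes y$ for a unique pair of non-degenerate cubes $x\in X_k$, $y\in Y_l$, and $x\otimes y$ has dimension $k+l$. A marked cubical set is a cubical set with a set of marked cubes of positive dimension containing all degenerate cubes; maps preserve marked cubes; $\mathsf{cSet}^+$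 is this category and $\upsilon$ the forgetful functor to cubical sets. Colimits are computed on underlying cubical sets, a cube being marked iff it is the image of a marked cube. A map $f\colon X\to Y$ in $\mathsf{cSet}^+$ is regular if a cube $x$ of $X$ is marked iff $f(x)$ is marked, and entire if $\upsilon f$ is an isomorphism. Lax Gray tensor $X\otimes Y$: the geometric product $\upsilon X\otimes\upsilon Y$ with non-degenerate $x\otimes y$ marked iff $x$ or $y$ is marked. Pseudo Gray tensor $X\circledast Y$: the geometric product with non-degenerate $x\otimes y$ unmarked iff ($x$ is a $0$-cube and $y$ unmarked) or ($x$ unmarked and $y$ a $0$-cube). $\mu_{X,Y}\colon X\otimes Y\to X\circledast Y$ is the identity on underlying cubical sets. For a bifunctor $\odot$ and maps $f\colon A\to X$, $g\colon B\to Y$, the Leibniz product is $f\hat\odot g\colon (X\odot B)\cup_{A\odot B}(A\odot Y)\to X\odot Y$. *)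

From mathcomp Require Import all_boot.
From mathcomp Require Import zify.
From Stdlib Require Import FunctionalExtensionality.
Set Implicit Arguments. Unset Strict Implicit. Unset Printing Implicit Defensive.

Definition pt (n : nat) := n.-tuple bool.
Definition mkpt (n : nat) (F : nat -> bool) : pt n := [tuple F (nat_of_ord j) | j < n].

Lemma nth_mkpt n F j : nth false (mkpt n F) j = if j < n then F j else false.
Proof.
case: ltnP => Hj.
  by rewrite -[j]/(nat_of_ord (Ordinal Hj)) nth_mktuple.
by rewrite nth_default // size_tuple.
Qed.

Lemma pt_ext n (s t : pt n) : (forall j, j < n -> nth false s j = nth false t j) -> s = t.
Proof.
move=> H; apply: val_inj; apply: (@eq_from_nth _ false); first by rewrite !size_tuple.
by move=> j; rewrite size_tuple => /H.
Qed.

Definition face (m n i : nat) (e : bool) (x : pt m) : pt n :=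
  mkpt n (fun j => if j < i then nth false x j else if j == i then e else nth false x j.-1).
Definition degen (m n i : nat) (x : pt m) : pt n :=
  mkpt n (fun j => nth false x (if j < i then j else j.+1)).
Definition conn (m n i : nat) (e : bool) (x : pt m) : pt n :=
  mkpt n (fun j => if j < i then nth false x j
                   else if j == i then
                     (if e then nth false x i || nth false x i.+1
                      else nth false x i && nth false x i.+1)
                   else nth false x j.+1).

Inductive box : forall m n : nat, (pt m -> pt n) -> Prop :=
| box_id n : box (fun x : pt n => x)
| box_comp m n p (f : pt m -> pt n) (g : pt n -> pt p) :
    box f -> box g -> box (fun x => g (f x))
| box_face m n i e : n = m.+1 -> i <= m -> box (@face m n i e)
| box_degen m n i : m = n.+1 -> i <= n -> box (@degen m n i)
| box_conn m n i e : m = n.+1 -> i < n -> box (@conn m n i e).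

Definition prodpt m1 n1 m2 n2 (f : pt m1 -> pt n1) (g : pt m2 -> pt n2)
  (x : pt (m1 + m2)) : pt (n1 + n2) :=
  mkpt (n1 + n2) (fun j => if j < n1 then nth false (f (mkpt m1 (fun a => nth false x a))) j
                           else nth false (g (mkpt m2 (fun a => nth false x (m1 + a)))) (j - n1)).

Ltac split_ifs := repeat match goal with |- context [if ?b then _ else _] =>
   lazymatch b with context [if _ then _ else _] => fail | _ =>
   let H := fresh "H" in case: (boolP b) => H end end.
Ltac fin := try lia; try (congr (nth _ _ _); lia);
  try (congr (_ || _); congr (nth _ _ _); lia);
  try (congr (_ && _); congr (nth _ _ _); lia).

Lemma box_prodl m n l (f : pt m -> pt n) : box f -> box (prodpt f (fun x : pt l => x)).
Proof.
elim=> {m n f}.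
- move=> n. have -> : prodpt (fun x : pt n => x) (fun x : pt l => x) = (fun x => x).
    apply: functional_extensionality => x; apply: pt_ext => j Hj.
    rewrite /prodpt !nth_mkpt; split_ifs; fin.
  exact: box_id.
- move=> m n p f g _ IHf _ IHg.
  have -> : prodpt (fun x => g (f x)) (fun x : pt l => x) =
            (fun x => prodpt g (fun x : pt l => x) (prodpt f (fun x : pt l => x) x)).
    apply: functional_extensionality => x; apply: pt_ext => j Hj.
    have E : mkpt n (fun a => nth false (prodpt f (fun x : pt l => x) x) a) =
             f (mkpt m (fun a => nth false x a)).
      apply: pt_ext => a Ha; rewrite /prodpt !nth_mkpt; split_ifs; fin.
    rewrite {1 2}/prodpt E !nth_mkpt; split_ifs; fin.
  exact: (box_comp IHf IHg).
- move=> m n i e -> Hi.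
  have -> : prodpt (@face m m.+1 i e) (fun x : pt l => x) = @face (m + l) (m.+1 + l) i e.
    apply: functional_extensionality => x; apply: pt_ext => j Hj.
    rewrite /prodpt /face !nth_mkpt; split_ifs; fin.
  by apply: (@box_face (m + l) (m.+1 + l) i e); lia.
- move=> m n i -> Hi.
  have -> : prodpt (@degen n.+1 n i) (fun x : pt l => x) = @degen (n.+1 + l) (n + l) i.
    apply: functional_extensionality => x; apply: pt_ext => j Hj.
    rewrite /prodpt /degen !nth_mkpt; split_ifs; fin.
  by apply: (@box_degen (n.+1 + l) (n + l) i); lia.
- move=> m n i e -> Hi.
  have -> : prodpt (@conn n.+1 n i e) (fun x : pt l => x) = @conn (n.+1 + l) (n + l) i e.
    apply: functional_extensionality => x; apply: pt_ext => j Hj.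
    rewrite /prodpt /conn !nth_mkpt; split_ifs; fin.
  by apply: (@box_conn (n.+1 + l) (n + l) i e); lia.
Qed.

Lemma box_prodr k m n (g : pt m -> pt n) : box g -> box (prodpt (fun x : pt k => x) g).
Proof.
elim=> {m n g}.
- move=> n. have -> : prodpt (fun x : pt k => x) (fun x : pt n => x) = (fun x => x).
    apply: functional_extensionality => x; apply: pt_ext => j Hj.
    rewrite /prodpt !nth_mkpt; split_ifs; fin.
  exact: box_id.
- move=> m n p f g _ IHf _ IHg.
  have -> : prodpt (fun x : pt k => x) (fun x => g (f x)) =
            (fun x => prodpt (fun x : pt k => x) g (prodpt (fun x : pt k => x) f x)).
    apply: functional_extensionality => x; apply: pt_ext => j Hj.
    have E : mkpt n (fun a => nth false (prodpt (fun x : pt k => x) f x) (k + a)) =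
             f (mkpt m (fun a => nth false x (k + a))).
      apply: pt_ext => a Ha; rewrite /prodpt !nth_mkpt; split_ifs; fin.
    rewrite {1 2}/prodpt E !nth_mkpt; split_ifs; fin.
  exact: (box_comp IHf IHg).
- move=> m n i e -> Hi.
  have -> : prodpt (fun x : pt k => x) (@face m m.+1 i e) = @face (k + m) (k + m.+1) (k + i) e.
    apply: functional_extensionality => x; apply: pt_ext => j Hj.
    rewrite /prodpt /face !nth_mkpt; split_ifs; fin.
  by apply: (@box_face (k + m) (k + m.+1) (k + i) e); lia.
- move=> m n i -> Hi.
  have -> : prodpt (fun x : pt k => x) (@degen n.+1 n i) = @degen (k + n.+1) (k + n) (k + i).
    apply: functional_extensionality => x; apply: pt_ext => j Hj.
    rewrite /prodpt /degen !nth_mkpt; split_ifs; fin.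
  by apply: (@box_degen (k + n.+1) (k + n) (k + i)); lia.
- move=> m n i e -> Hi.
  have -> : prodpt (fun x : pt k => x) (@conn n.+1 n i e) = @conn (k + n.+1) (k + n) (k + i) e.
    apply: functional_extensionality => x; apply: pt_ext => j Hj.
    rewrite /prodpt /conn !nth_mkpt; split_ifs; fin.
  by apply: (@box_conn (k + n.+1) (k + n) (k + i) e); lia.
Qed.

Lemma box_prod m1 n1 m2 n2 (f : pt m1 -> pt n1) (g : pt m2 -> pt n2) :
  box f -> box g -> box (prodpt f g).
Proof.
move=> bf bg.
have -> : prodpt f g = (fun x => prodpt f (fun y : pt n2 => y) (prodpt (fun y : pt m1 => y) g x)).
  apply: functional_extensionality => x; apply: pt_ext => j Hj.
  rewrite /prodpt !nth_mkpt; split_ifs; fin.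
  - congr (nth _ (f _) _); apply: pt_ext => a Ha; rewrite !nth_mkpt; split_ifs; fin.
exact: (box_comp (box_prodr _ bg) (box_prodl _ bf)).
Qed.

(* The box category: morphisms [1]^m -> [1]^n are the maps of points  *)
(* generated (under composition, with identities) by faces,           *)
(* degeneracies and connections.  Coordinates are 0-based.            *)

Record Hom (m n : nat) := MkHom { hfun : pt m -> pt n; hbox : box hfun }.

Definition hid (n : nat) : Hom n n := MkHom (box_id n).
Definition hcomp m n p (g : Hom n p) (f : Hom m n) : Hom m p :=
  MkHom (box_comp (hbox f) (hbox g)).
Definition hprod m1 n1 m2 n2 (f : Hom m1 n1) (g : Hom m2 n2) : Hom (m1 + m2) (n1 + n2) :=
  MkHom (box_prod (hbox f) (hbox g)).

Record cset := CSet {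
  cell : nat -> Type;
  act : forall m n, Hom m n -> cell n -> cell m;
  act_id : forall n (x : cell n), act (hid n) x = x;
  act_comp : forall m n p (f : Hom m n) (g : Hom n p) (x : cell p),
      act (hcomp g f) x = act f (act g x) }.

Arguments act {c m n} f x.

Definition degenerate (X : cset) (n : nat) (x : cell X n) : Prop :=
  exists m (y : cell X m) (h : Hom n m), n = m.+1 /\ x = act h y /\
    ((exists i, i <= m /\ hfun h = @degen n m i) \/
     (exists i e, i < m /\ hfun h = @conn n m i e)).

Record cmap (X Y : cset) := CMap {
  cmfun :> forall n, cell X n -> cell Y n;
  cm_nat : forall m n (f : Hom m n) (x : cell X n),
      cmfun (act f x) = act f (cmfun x) }.
Arguments cmfun {X Y} c n x.

Record mcset := MCSet {
  under :> cset;
  marked : forall n, cell under n -> Prop;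
  marked_pos : forall x : cell under 0, ~ marked x;
  marked_deg : forall n (x : cell under n), degenerate x -> marked x }.
Arguments marked {m n} x.

Record mmap (X Y : mcset) := MMap {
  mmcmap :> cmap X Y;
  mm_marked : forall n (x : cell X n), marked x -> marked (mmcmap n x) }.

Definition mono (A X : mcset) (f : mmap A X) : Prop :=
  forall (Z : mcset) (h k : mmap Z A),
    (forall n (z : cell Z n), f n (h n z) = f n (k n z)) ->
    forall n (z : cell Z n), h n z = k n z.

Definition regular (X Y : mcset) (f : mmap X Y) : Prop :=
  forall n (x : cell X n), marked x <-> marked (f n x).

Definition entire (X Y : mcset) (f : mmap X Y) : Prop :=
  exists v : cmap Y X, (forall n (x : cell X n), v n (f n x) = x) /\
                       (forall n (y : cell Y n), f n (v n y) = y).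

Definition iso (X Y : mcset) (f : mmap X Y) : Prop :=
  exists v : mmap Y X, (forall n (x : cell X n), v n (f n x) = x) /\
                       (forall n (y : cell Y n), f n (v n y) = y).

Definition is_pushout (A B C P : mcset) (f : mmap A B) (g : mmap A C)
    (i : mmap B P) (j : mmap C P) : Prop :=
  (forall n (a : cell A n), i n (f n a) = j n (g n a)) /\
  forall (Z : mcset) (h : mmap B Z) (k : mmap C Z),
    (forall n (a : cell A n), h n (f n a) = k n (g n a)) ->
    exists u : mmap P Z,
      (forall n (b : cell B n), u n (i n b) = h n b) /\
      (forall n (c : cell C n), u n (j n c) = k n c) /\
      forall u' : mmap P Z,
        (forall n (b : cell B n), u' n (i n b) = h n b) ->
        (forall n (c : cell C n), u' n (j n c) = k n c) ->
        forall n (p : cell P n), u' n p = u n p.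

(* Geometric product = Day convolution, given by its universal         *)
(* property: a universal family X_k x Y_l -> T_{k+l}, natural in       *)
(* ([1]^k,[1]^l) in box x box.                                        *)

Definition bimor (X Y Z : cset) (s : forall k l, cell X k -> cell Y l -> cell Z (k + l)) :=
  forall k k' l l' (phi : Hom k' k) (psi : Hom l' l) (x : cell X k) (y : cell Y l),
    s k' l' (act phi x) (act psi y) = act (hprod phi psi) (s k l x y).

Record gprod (X Y : cset) := GProd {
  gp :> cset;
  gpt : forall k l, cell X k -> cell Y l -> cell gp (k + l);
  gpt_bimor : bimor gpt;
  gp_univ : forall (Z : cset) s, @bimor X Y Z s ->
    exists u : cmap gp Z, (forall k l x y, u _ (gpt x y) = s k l x y) /\
      forall v : cmap gp Z, (forall k l x y, v _ (gpt x y) = s k l x y) ->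
        forall n (z : cell gp n), v n z = u n z }.
Arguments gpt {X Y} g {k l} x y.

Definition tens (X Y : cset) (P : gprod X Y) k l n (e : k + l = n)
    (x : cell X k) (y : cell Y l) : cell P n :=
  eq_rect (k + l) (cell P) (gpt P x y) n e.

Definition lax_marked (X Y : mcset) (P : gprod X Y) n (z : cell P n) : Prop :=
  degenerate z \/
  exists k l (e : k + l = n) (x : cell X k) (y : cell Y l),
    ~ degenerate x /\ ~ degenerate y /\ z = tens P e x y /\ (marked x \/ marked y).

Definition pseudo_marked (X Y : mcset) (P : gprod X Y) n (z : cell P n) : Prop :=
  degenerate z \/
  exists k l (e : k + l = n) (x : cell X k) (y : cell Y l),
    ~ degenerate x /\ ~ degenerate y /\ z = tens P e x y /\
    ~ ((k = 0 /\ ~ marked y) \/ (~ marked x /\ l = 0)).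

Lemma lax_marked_pos (X Y : mcset) (P : gprod X Y) (z : cell P 0) : ~ lax_marked z.
Proof.
case=> [[m [y [h [E _]]]] //|[k [l [e [x [y [_ [_ [_ H]]]]]]]]].
case: k l e x y H => [|k] [|l] //= e x y [] H.
- exact: (marked_pos H).
- exact: (marked_pos H).
Qed.

Lemma pseudo_marked_pos (X Y : mcset) (P : gprod X Y) (z : cell P 0) : ~ pseudo_marked z.
Proof.
case=> [[m [y [h [E _]]]] //|[k [l [e [x [y [_ [_ [_ H]]]]]]]]].
case: k l e x y H => [|k] [|l] //= e x y H.
by apply: H; left; split => //; exact: marked_pos.
Qed.

Inductive gray := LaxG | PseudoG.

Definition gmarked (o : gray) (X Y : mcset) (P : gprod X Y) n (z : cell P n) : Prop :=
  match o with LaxG => lax_marked z | PseudoG => pseudo_marked z end.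

Lemma gmarked_pos o (X Y : mcset) (P : gprod X Y) (z : cell P 0) : ~ gmarked o z.
Proof. case: o; [exact: lax_marked_pos | exact: pseudo_marked_pos]. Qed.

Lemma gmarked_deg o (X Y : mcset) (P : gprod X Y) n (z : cell P n) :
  degenerate z -> gmarked o z.
Proof. by case: o => d; left. Qed.

Definition GT (o : gray) (X Y : mcset) (P : gprod X Y) : mcset :=
  @MCSet (gp P) (@gmarked o X Y P) (@gmarked_pos o X Y P) (@gmarked_deg o X Y P).

Notation Lax := (GT LaxG).
Notation Pseudo := (GT PseudoG).

Lemma lax_pseudo (X Y : mcset) (P : gprod X Y) n (z : cell P n) :
  lax_marked z -> pseudo_marked z.
Proof.
case=> [d|[k [l [e [x [y [dx [dy [Ez H]]]]]]]]]; [by left|right].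
exists k, l, e, x, y; split=> //; split=> //; split=> //.
case=> [[k0 Hy]|[Hx l0]].
- subst k; case: H => H; last by [].
  exact: (marked_pos H).
- subst l; case: H => H; first by [].
  exact: (marked_pos H).
Qed.

Definition idcmap (X : cset) : cmap X X := @CMap X X (fun n x => x) (fun m n f x => erefl).

Definition mu (X Y : mcset) (P : gprod X Y) : mmap (Lax P) (Pseudo P) :=
  @MMap (Lax P) (Pseudo P) (idcmap P) (@lax_pseudo X Y P).

Definition tensor_map (A B X Y : cset) (f : cmap A X) (g : cmap B Y)
    (P : gprod A B) (Q : gprod X Y) (u : cmap P Q) : Prop :=
  forall k l (a : cell A k) (b : cell B l), u _ (gpt P a b) = gpt Q (f k a) (g l b).

Definition leibniz (o : gray) (A B X Y : mcset) (f : mmap A X) (g : mmap B Y)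
    (PAB : gprod A B) (PXB : gprod X B) (PAY : gprod A Y) (PXY : gprod X Y)
    (P : mcset) (i : mmap (GT o PXB) P) (j : mmap (GT o PAY) P)
    (h : mmap P (GT o PXY)) : Prop :=
  exists (fB : mmap (GT o PAB) (GT o PXB)) (Ag : mmap (GT o PAB) (GT o PAY))
         (Xg : mmap (GT o PXB) (GT o PXY)) (fY : mmap (GT o PAY) (GT o PXY)),
    tensor_map f (idcmap B) (mmcmap fB) /\ tensor_map (idcmap A) g (mmcmap Ag) /\
    tensor_map (idcmap X) g (mmcmap Xg) /\ tensor_map f (idcmap Y) (mmcmap fY) /\
    is_pushout fB Ag i j /\
    (forall n (b : cell (GT o PXB) n), h n (i n b) = Xg n b) /\
    (forall n (c : cell (GT o PAY) n), h n (j n c) = fY n c).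
Arguments leibniz o {A B X Y} f g PAB PXB PAY PXY {P} i j h.

From mathcomp Require Import all_boot.
From mathcomp Require Import zify.
From Stdlib Require Import FunctionalExtensionality ProofIrrelevance PropExtensionality Classical.
Set Implicit Arguments. Unset Strict Implicit. Unset Printing Implicit Defensive.

(* The lax and pseudo Leibniz products of f and g have the same underlying map
   of cubical sets; only the markings differ.  The whole proof therefore
   rests on a description of the cubes of a geometric product P = X (x) Y:
   - every cube of P is degenerate or a tensor x (x) y of non-degenerate
     cubes (normal form of box morphisms: degeneracies and connections can
     be pushed past faces, and P is generated by the tensors x (x) y);
   - such a decomposition is unique and x (x) y is then non-degenerate
     (project P onto the levelwise product of X and Y);
   so a Gray tensor marks a non-degenerate cube according to [gray_rule]
   applied to the markings of its two factors ([gmarked_tensE]).  The four parts then follow: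
   (1) every cube of the pushout comes from X(.)B or A(.)Y, where X(.)g and
   f(.)Y reflect markings; (2) an entire factor makes f(.)B (or A(.)g)
   invertible, whose cobase change inverts the Leibniz map; (3) with both
   factors entire that inverse preserves markings by [gray_rule]; (4) the
   square is a pushout because underlying maps are forced and the induced
   map out of the pseudo tensor preserves the extra pseudo markings. *)

Lemma hom_eq m n (f g : Hom m n) : (forall x, hfun f x = hfun g x) -> f = g.
Proof.
case: f g => F HF [G HG] /= E.
have EFG : F = G by apply: functional_extensionality.
subst G; by rewrite (proof_irrelevance _ HF HG).
Qed.

Lemma act_ext (X : cset) m n (f g : Hom m n) (x : cell X n) :
  (forall p, hfun f p = hfun g p) -> act f x = act g x.
Proof. by move=> /hom_eq ->. Qed.

Lemma box_ext m n (F G : pt m -> pt n) : box F -> (forall x, F x = G x) -> box G.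
Proof.
move=> H E; have -> : G = F by apply: functional_extensionality => x; rewrite E.
exact: H.
Qed.

Lemma act_comp_box (X : cset) m n p (F : pt m -> pt n) (G : pt n -> pt p)
   (bF : box F) (bG : box G) (bFG : box (fun x => G (F x))) (z : cell X p) :
  act (MkHom bFG) z = act (MkHom bF) (act (MkHom bG) z).
Proof. rewrite -act_comp; exact: act_ext. Qed.

Ltac ptx := apply: pt_ext => ? ?; rewrite /face /degen /conn /prodpt !nth_mkpt; split_ifs; fin.

Definition elem_degen n m (h : pt n -> pt m) : Prop :=
  n = m.+1 /\ ((exists i, i <= m /\ h = @degen n m i) \/
               (exists i e, i < m /\ h = @conn n m i e)).
Definition elem_face m n (d : pt m -> pt n) : Prop :=
  n = m.+1 /\ exists i c, i <= m /\ d = @face m n i c.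

Lemma elem_degen_box n m (h : pt n -> pt m) : elem_degen h -> box h.
Proof. case=> E [[i [Hi ->]]|[i [e [Hi ->]]]]; [exact: box_degen | exact: box_conn]. Qed.

Lemma elem_face_box m n (d : pt m -> pt n) : elem_face d -> box d.
Proof. case=> E [i [c [Hi ->]]]; exact: box_face. Qed.

Lemma degen_face_swap n m (h : pt n -> pt m) (d : pt m -> pt n) :
  elem_degen h -> elem_face d ->
  (forall x, h (d x) = x) \/
  exists q (h' : pt m -> pt q) (d' : pt q -> pt m),
    elem_degen h' /\ elem_face d' /\ forall x, h (d x) = d' (h' x).
Proof.
case=> En [[j [Hj ->]]|[j [e [Hj ->]]]] [_ [i [c [Hi ->]]]]; subst n.
- case: (ltngtP i j) => Hij.
  + right; case: m {h d} Hj Hi Hij => [|q] Hj Hi Hij; first by lia.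
    exists q, (@degen q.+1 q j.-1), (@face q q.+1 i c); split; [|split].
    * split=> //; left; exists j.-1; split=> //; lia.
    * split=> //; exists i, c; split=> //; lia.
    * move=> x; ptx.
  + right; case: m {h d} Hj Hi Hij => [|q] Hj Hi Hij; first by lia.
    exists q, (@degen q.+1 q j), (@face q q.+1 i.-1 c); split; [|split].
    * split=> //; left; exists j; split=> //; lia.
    * split=> //; exists i.-1, c; split=> //; lia.
    * move=> x; ptx.
  + by left; subst i => x; ptx.
- case: m {h d} Hj Hi => [|q] Hj Hi; first by lia.
  case: (ltnP i j) => Hij.
  + right; exists q, (@conn q.+1 q j.-1 e), (@face q q.+1 i c); split; [|split].
    * split=> //; right; exists j.-1, e; split=> //; lia.
    * split=> //; exists i, c; split=> //; lia.
    * move=> x; ptx.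
  case: (ltnP j.+1 i) => Hji.
  + right; exists q, (@conn q.+1 q j e), (@face q q.+1 i.-1 c); split; [|split].
    * split=> //; right; exists j, e; split=> //; lia.
    * split=> //; exists i.-1, c; split=> //; lia.
    * move=> x; ptx.
  case: (eqVneq c e) => Hce.
  + subst c; right; exists q, (@degen q.+1 q j), (@face q q.+1 j e); split; [|split].
    * split=> //; left; exists j; split=> //; lia.
    * split=> //; exists j, e; split=> //; lia.
    * move=> x; ptx.
  + left => x; case: e c Hce {Hi} => [] [] // _; ptx; rewrite ?orbF ?andbT ?orFb ?andTb; fin.
Qed.

Inductive degen_word : forall n m, (pt n -> pt m) -> Prop :=
| dw_id n : degen_word (fun x : pt n => x)
| dw_cons n n' m (h : pt n -> pt n') (E : pt n' -> pt m) :
    elem_degen h -> degen_word E -> degen_word (fun x => E (h x)).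

Inductive face_word : forall n m, (pt n -> pt m) -> Prop :=
| fw_id n : face_word (fun x : pt n => x)
| fw_cons a b c (d : pt a -> pt b) (G : pt b -> pt c) :
    elem_face d -> face_word G -> face_word (fun x => G (d x)).

Lemma degen_word_box n m (E : pt n -> pt m) : degen_word E -> box E.
Proof.
elim=> {n m E}; first exact: box_id.
move=> n n' m h E /elem_degen_box bh _ bE; exact: box_comp bh bE.
Qed.

Lemma face_word_box n m (E : pt n -> pt m) : face_word E -> box E.
Proof.
elim=> {n m E}; first exact: box_id.
move=> a b c d G /elem_face_box bd _ bG; exact: box_comp bd bG.
Qed.

Lemma degen_word_face_swap n m (E : pt n -> pt m) : degen_word E ->
  forall p (d : pt p -> pt n), elem_face d ->
  exists r (E' : pt p -> pt r) (G : pt r -> pt m),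
    degen_word E' /\ face_word G /\ forall x, E (d x) = G (E' x).
Proof.
elim=> {n m E}.
- move=> n p d Hd; exists p, (fun x => x), (fun x => (fun y => y) (d x)).
  split; [exact: dw_id | split=> //]; exact: fw_cons Hd (fw_id n).
- move=> n n' m h E Hh HE IH p d Hd.
  have Epn : p = n' by case: Hh => E1 _; case: Hd => E2 _; lia.
  subst p; case: (degen_face_swap Hh Hd) => [Hid|[q [h' [d' [Hh' [Hd' Ecom]]]]]].
  + exists m, E, (fun x => x); split=> //; split; first exact: fw_id.
    by move=> x; rewrite Hid.
  + case: (IH q d' Hd') => [r [E'' [G [HE'' [HG Ecom']]]]].
    exists r, (fun x => E'' (h' x)), G; split; first exact: dw_cons Hh' HE''.
    by split=> // x; rewrite Ecom Ecom'.
Qed.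

Lemma sig_eq (A : Type) (Q : A -> Prop) (a b : {x | Q x}) : proj1_sig a = proj1_sig b -> a = b.
Proof. case: a b => a Ha [b Hb] /= E; subst b; by rewrite (proof_irrelevance _ Ha Hb). Qed.

Definition closed_pred (C : cset) (Ip : forall n, cell C n -> Prop) : Prop :=
  forall m n (f : Hom m n) (z : cell C n), Ip n z -> Ip m (act f z).

Definition generating (C : cset) (Ip : forall n, cell C n -> Prop) : Prop :=
  forall (Z : cset) (v1 v2 : cmap C Z),
    (forall n (z : cell C n), Ip n z -> v1 n z = v2 n z) -> forall n z, v1 n z = v2 n z.

(* The cubical set of cubes of C tagged by propositions implied by Ip: the two
   tagging maps [z |-> (z, True)] and [z |-> (z, Ip z)] agree exactly on Ip. *)
Section Tagged.
Variables (C : cset) (Ip : forall n, cell C n -> Prop) (Icl : closed_pred Ip).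

Definition tcell n := {zp : cell C n * Prop | Ip zp.1 -> zp.2}.
Definition tact m n (f : Hom m n) (z : tcell n) : tcell m :=
  exist (fun zp : cell C m * Prop => Ip zp.1 -> zp.2)
    (act f (proj1_sig z).1, (proj1_sig z).2 \/ Ip (act f (proj1_sig z).1)) (fun H => or_intror H).

Lemma tact_id n (z : tcell n) : tact (hid n) z = z.
Proof.
apply: sig_eq; case: z => [[z p] H] /=; rewrite act_id; congr pair.
apply: propositional_extensionality; split; [case=> //; exact: H | by left].
Qed.

Lemma tact_comp m n p (f : Hom m n) (g : Hom n p) (z : tcell p) :
  tact (hcomp g f) z = tact f (tact g z).
Proof.
apply: sig_eq; case: z => [[z q] H] /=; rewrite act_comp; congr pair.
apply: propositional_extensionality; split.
- by case; [move=> ?; left; left | right].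
- case; [case; [by left | by move=> /(Icl f) ?; right] | by right].
Qed.

Definition Tagged : cset := @CSet tcell tact tact_id tact_comp.

Definition tag_true_fun n (z : cell C n) : cell Tagged n :=
  exist (fun zp : cell C n * Prop => Ip zp.1 -> zp.2) (z, True) (fun _ => I).
Definition tag_pred_fun n (z : cell C n) : cell Tagged n :=
  exist (fun zp : cell C n * Prop => Ip zp.1 -> zp.2) (z, Ip z) id.

Lemma tag_true_nat m n (f : Hom m n) (z : cell C n) :
  tag_true_fun (act f z) = act f (tag_true_fun z).
Proof. apply: sig_eq => /=; congr pair; apply: propositional_extensionality; split=> //; by left. Qed.

Lemma tag_pred_nat m n (f : Hom m n) (z : cell C n) :
  tag_pred_fun (act f z) = act f (tag_pred_fun z).
Proof.
apply: sig_eq => /=; congr pair; apply: propositional_extensionality; split; first by right.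
case=> //; exact: Icl.
Qed.

Definition tag_true : cmap C Tagged := CMap tag_true_nat.
Definition tag_pred : cmap C Tagged := CMap tag_pred_nat.

Lemma generating_all : generating Ip -> forall n (z : cell C n), Ip z.
Proof.
move=> gen n z.
have /(f_equal (fun w => (proj1_sig w).2)) /= <- // : tag_true n z = tag_pred n z.
apply: gen => m x Ix; apply: sig_eq => /=; congr pair.
exact: propositional_extensionality.
Qed.
End Tagged.

Lemma gprod_map_ext (X Y Z : cset) (P : gprod X Y) (u v : cmap P Z) :
  (forall k l (x : cell X k) (y : cell Y l), u _ (gpt P x y) = v _ (gpt P x y)) ->
  forall n z, u n z = v n z.
Proof.
move=> E; pose s k l (x : cell X k) (y : cell Y l) := v _ (gpt P x y).
have bs : bimor s by move=> k k' l l' phi psi x y; rewrite /s (gpt_bimor P) cm_nat.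
case: (gp_univ P bs) => w [_ Hw] n z.
by rewrite (Hw u E) (Hw v).
Qed.

Section Generation.
Variables (X Y : cset) (P : gprod X Y).

Definition from_tensor n (z : cell P n) : Prop :=
  exists k l (phi : Hom n (k + l)) (x : cell X k) (y : cell Y l), z = act phi (gpt P x y).

Lemma from_tensor_closed : closed_pred (@from_tensor).
Proof.
move=> m n f z [k [l [phi [x [y ->]]]]].
by exists k, l, (hcomp phi f), x, y; rewrite act_comp.
Qed.

Lemma gprod_generated n (z : cell P n) : from_tensor z.
Proof.
apply: (generating_all from_tensor_closed) => Z v1 v2 E.
apply: gprod_map_ext => k l x y; apply: E.
by exists k, l, (hid _), x, y; rewrite act_id.
Qed.
End Generation.

Lemma prod_degen_l m l i : i <= m ->
  prodpt (@degen m.+1 m i) (fun x : pt l => x) = @degen (m.+1 + l) (m + l) i.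
Proof. move=> Hi; apply: functional_extensionality => x; ptx. Qed.
Lemma prod_conn_l m l i e : i < m ->
  prodpt (@conn m.+1 m i e) (fun x : pt l => x) = @conn (m.+1 + l) (m + l) i e.
Proof. move=> Hi; apply: functional_extensionality => x; ptx. Qed.
Lemma prod_degen_r k m i : i <= m ->
  prodpt (fun x : pt k => x) (@degen m.+1 m i) = @degen (k + m.+1) (k + m) (k + i).
Proof. move=> Hi; apply: functional_extensionality => x; ptx. Qed.
Lemma prod_conn_r k m i e : i < m ->
  prodpt (fun x : pt k => x) (@conn m.+1 m i e) = @conn (k + m.+1) (k + m) (k + i) e.
Proof. move=> Hi; apply: functional_extensionality => x; ptx. Qed.

Section Tensors.
Variables (X Y : cset) (P : gprod X Y).

Definition is_tensor n (z : cell P n) : Prop :=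
  exists k l (e : k + l = n) (x : cell X k) (y : cell Y l), z = tens P e x y.

Definition nd_tensor n (z : cell P n) : Prop :=
  exists k l (e : k + l = n) (x : cell X k) (y : cell Y l),
    ~ degenerate x /\ ~ degenerate y /\ z = tens P e x y.

Lemma is_tensor_face p n (d : pt p -> pt n) (Hd : elem_face d) (bd : box d) (z : cell P n) :
  is_tensor z -> is_tensor (act (MkHom bd) z).
Proof.
case=> k [l [e [x [y Ez]]]]; subst z n.
case: Hd => En [i [c [Hi Ed]]]; subst d.
case: (ltnP i k) => Hik.
- case: k x En Hi Hik bd => [|k] x En Hi Hik bd; first by lia.
  have e' : k + l = p by lia. subst p.
  exists k, l, erefl, (act (MkHom (@box_face k k.+1 i c erefl ltac:(lia))) x), y.
  rewrite /tens /= -{2}(act_id y) (gpt_bimor P).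
  apply: act_ext => q /=; ptx.
- case: l y En Hi Hik bd => [|l] y En Hi Hik bd; first by lia.
  have e' : k + l = p by lia. subst p.
  exists k, l, erefl, x, (act (MkHom (@box_face l l.+1 (i - k) c erefl ltac:(lia))) y).
  rewrite /tens /= -{2}(act_id x) (gpt_bimor P).
  apply: act_ext => q /=; ptx.
Qed.

Lemma is_tensor_face_word n m (G : pt n -> pt m) (HG : face_word G) (bG : box G) (t : cell P m) :
  is_tensor t -> is_tensor (act (MkHom bG) t).
Proof.
elim: HG bG t => {n m G}.
- by move=> n bG t Ht; rewrite (act_ext _ (g := hid n)) // act_id.
- move=> a b c d G Hd HG IH bG t Ht.
  rewrite (act_comp_box (elem_face_box Hd) (face_word_box HG)).
  apply: is_tensor_face => //; exact: IH.
Qed.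

Lemma is_tensor_cases n (z : cell P n) : is_tensor z -> degenerate z \/ nd_tensor z.
Proof.
case=> k [l [e [x [y Ez]]]]; subst z n.
case: (classic (degenerate x)) => [[m0 [x0 [h [Ek [Ex Hh]]]]]|ndx].
  left; subst k x; exists (m0 + l), (gpt P x0 y), (hprod h (hid l)); split; first by lia.
  split; first by rewrite /tens /= -{1}(act_id y) (gpt_bimor P).
  case: Hh => [[i [Hi Hh]]|[i [e [Hi Hh]]]]; [left; exists i|right; exists i, e];
    split; try lia; rewrite /= Hh; [exact: prod_degen_l Hi | exact: prod_conn_l Hi].
case: (classic (degenerate y)) => [[m0 [y0 [h [El [Ey Hh]]]]]|ndy].
  left; subst l y; exists (k + m0), (gpt P x y0), (hprod (hid k) h); split; first by lia.
  split; first by rewrite /tens /= -{1}(act_id x) (gpt_bimor P).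
  case: Hh => [[i [Hi Hh]]|[i [e [Hi Hh]]]]; [left; exists (k + i)|right; exists (k + i), e];
    split; try lia; rewrite /= Hh; [exact: prod_degen_r Hi | exact: prod_conn_r Hi].
by right; exists k, l, erefl, x, y.
Qed.

Definition degen_of_tensor n (z : cell P n) : Prop :=
  exists n' (E : pt n -> pt n') (bE : box E) (t : cell P n'),
    degen_word E /\ is_tensor t /\ z = act (MkHom bE) t.

Lemma degen_of_tensor_act m n (F : pt m -> pt n) : box F ->
  forall (bF : box F) (z : cell P n), degen_of_tensor z -> degen_of_tensor (act (MkHom bF) z).
Proof.
elim=> {m n F}.
- by move=> n bF z Dz; rewrite (act_ext _ (g := hid n)) // act_id.
- move=> m n p f g bf IHf bg IHg bF z Dz.
  rewrite (act_comp_box bf bg); exact: IHf (IHg _ _ Dz).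
- move=> m n i e En Hi bF z [n' [E [bE [t [HE [Ht ->]]]]]].
  have Hd : elem_face (@face m n i e) by split=> //; exists i, e.
  case: (degen_word_face_swap HE Hd) => [r [E' [G [HE' [HG Ecom]]]]].
  exists r, E', (degen_word_box HE'), (act (MkHom (face_word_box HG)) t); split=> //; split.
    exact: is_tensor_face_word.
  by rewrite -!act_comp; apply: act_ext => q /=; exact: Ecom.
- move=> m n i Em Hi bF z [n' [E [bE [t [HE [Ht ->]]]]]].
  have Hh : elem_degen (@degen m n i) by split=> //; left; exists i.
  exists n', (fun x => E (@degen m n i x)), (box_comp bF bE), t.
  split; first exact: dw_cons Hh HE.
  by split=> //; rewrite -act_comp; exact: act_ext.
- move=> m n i e Em Hi bF z [n' [E [bE [t [HE [Ht ->]]]]]].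
  have Hh : elem_degen (@conn m n i e) by split=> //; right; exists i, e.
  exists n', (fun x => E (@conn m n i e x)), (box_comp bF bE), t.
  split; first exact: dw_cons Hh HE.
  by split=> //; rewrite -act_comp; exact: act_ext.
Qed.

Lemma degen_of_tensor_cases n (z : cell P n) : degen_of_tensor z -> degenerate z \/ nd_tensor z.
Proof.
case=> n' [E [bE [t [HE [Ht Ez]]]]]; subst z.
case: HE bE t Ht => {n n' E}.
- move=> n bE t Ht; rewrite (act_ext _ (g := hid n)) // act_id; exact: is_tensor_cases.
- move=> n n'' m h E Hh HE bE t Ht; left.
  exists n'', (act (MkHom (degen_word_box HE)) t), (MkHom (elem_degen_box Hh)).
  case: (Hh) => En Hkind; split=> //; split=> //.
  by rewrite -act_comp; exact: act_ext.
Qed.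

Lemma gprod_cube_cases n (z : cell P n) : degenerate z \/ nd_tensor z.
Proof.
apply: degen_of_tensor_cases.
case: (gprod_generated z) => k [l [[F bF] [x [y ->]]]].
apply: degen_of_tensor_act => //.
exists (k + l), (fun x => x), (box_id _), (gpt P x y); split; first exact: dw_id.
split; first by exists k, l, erefl, x, y.
by rewrite (act_ext _ (g := hid _)) // act_id.
Qed.
End Tensors.

Definition take_pt n k (x : pt n) : pt k := mkpt k (fun j => nth false x j).
Definition drop_pt n k l (x : pt n) : pt l := mkpt l (fun j => nth false x (k + j)).
Definition pad_pt n k (c : bool) (x : pt k) : pt n :=
  mkpt n (fun j => if j < k then nth false x j else c).
Definition shift_pt n k l (x : pt l) : pt n :=
  mkpt n (fun j => if j < k then false else nth false x (j - k)).

Ltac ptq := apply: pt_ext => ? ?;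
  rewrite /face /degen /conn /prodpt /take_pt /drop_pt /pad_pt /shift_pt !nth_mkpt; split_ifs; fin.

Lemma box_take n k : k <= n -> box (@take_pt n k).
Proof.
move=> H; have [d ->] : exists d, n = k + d by exists (n - k); lia.
elim: d {H} => [|d IH].
  by rewrite addn0; apply: (box_ext (box_id _)) => x; ptq.
apply: (box_ext (box_comp (@box_degen (k + d.+1) (k + d) (k + d) ltac:(lia) ltac:(lia)) IH)).
by move=> x; ptq.
Qed.

Lemma box_drop n k l : k + l = n -> box (@drop_pt n k l).
Proof.
elim: k n => [|k IH] n H.
  by subst n; apply: (box_ext (box_id _)) => x; ptq.
case: n H => [|n] H; first by lia.
by apply: (box_ext (box_comp (@box_degen n.+1 n 0 erefl ltac:(lia)) (IH n ltac:(lia)))) => x; ptq.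
Qed.

Lemma box_pad n k c : k <= n -> box (@pad_pt n k c).
Proof.
move=> H; have [d ->] : exists d, n = k + d by exists (n - k); lia.
elim: d {H} => [|d IH].
  by rewrite addn0; apply: (box_ext (box_id _)) => x; ptq.
apply: (box_ext (box_comp IH (@box_face (k + d) (k + d.+1) (k + d) c ltac:(lia) ltac:(lia)))).
by move=> x; ptq.
Qed.

Lemma box_shift n k l : k + l = n -> box (@shift_pt n k l).
Proof.
elim: k n => [|k IH] n H.
  by subst n; apply: (box_ext (box_id _)) => x; ptq.
case: n H => [|n] H; first by lia.
by apply: (box_ext (box_comp (IH n ltac:(lia)) (@box_face n n.+1 0 false erefl ltac:(lia)))) => x; ptq.
Qed.

Definition Take n k (H : k <= n) : Hom n k := MkHom (box_take H).
Definition Drop n k l (H : k + l = n) : Hom n l := MkHom (box_drop H).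
Definition Pad n k c (H : k <= n) : Hom k n := MkHom (box_pad c H).
Definition Shift n k l (H : k + l = n) : Hom l n := MkHom (box_shift H).

Lemma pad_take (X : cset) n k c (H H' : k <= n) (x : cell X k) :
  act (Pad c H) (act (Take H') x) = x.
Proof. by rewrite -act_comp -{2}(act_id x); apply: act_ext => q /=; ptq. Qed.

Lemma shift_drop (X : cset) n k l (H H' : k + l = n) (y : cell X l) :
  act (Shift H) (act (Drop H') y) = y.
Proof. by rewrite -act_comp -{2}(act_id y); apply: act_ext => q /=; ptq. Qed.

Section Product.
Variables (X Y : cset).
Definition pcell n := (cell X n * cell Y n)%type.
Definition pact m n (f : Hom m n) (z : pcell n) : pcell m := (act f z.1, act f z.2).
Lemma pact_id n (z : pcell n) : pact (hid n) z = z.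
Proof. by case: z => x y; rewrite /pact /= !act_id. Qed.
Lemma pact_comp m n p (f : Hom m n) (g : Hom n p) (z : pcell p) :
  pact (hcomp g f) z = pact f (pact g z).
Proof. by case: z => x y; rewrite /pact /= !act_comp. Qed.
Definition Prod : cset := @CSet pcell pact pact_id pact_comp.

Definition split_proj k l (x : cell X k) (y : cell Y l) : cell Prod (k + l) :=
  (act (Take (leq_addr l k)) x, act (Drop (erefl (k + l))) y).

Lemma split_proj_bimor : bimor split_proj.
Proof.
move=> k k' l l' phi psi x y; rewrite /split_proj /= /pact /=.
by congr pair; rewrite -!act_comp; apply: act_ext => q /=; ptq.
Qed.

Lemma tensor_projection (P : gprod X Y) : exists u : cmap P Prod,
  forall k l n (e : k + l = n) x y (H1 : k <= n) (H2 : k + l = n),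
    u n (tens P e x y) = (act (Take H1) x, act (Drop H2) y).
Proof.
case: (gp_univ P split_proj_bimor) => u [Hu _]; exists u => k l n e x y H1 H2.
by subst n; rewrite /tens /= Hu /split_proj; congr pair; exact: act_ext.
Qed.
End Product.

Definition elem_at n m (h : Hom n m) (i : nat) : Prop :=
  n = m.+1 /\ ((i <= m /\ hfun h = @degen n m i) \/
               (exists c, i < m /\ hfun h = @conn n m i c)).

Lemma degenerate_elem_at (X : cset) n (z : cell X n) :
  degenerate z -> exists m (w : cell X m) (h : Hom n m) i, z = act h w /\ elem_at h i.
Proof.
case=> m [w [h [En [Ez [[i [Hi Hh]]|[i [c [Hi Hh]]]]]]]].
- by exists m, w, h, i; split=> //; split=> //; left.
- by exists m, w, h, i; split=> //; split=> //; right; exists c.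
Qed.

Lemma take_elem_at_degenerate (X : cset) k n m (Hk : k <= n) (x : cell X k) (w : cell X m)
    (h : Hom n m) i :
  i < k -> elem_at h i -> act (Take Hk) x = act h w -> degenerate x.
Proof.
case: k Hk x => [|q] Hk x Hik; first by lia.
case=> En Hh E; subst n; have Hq : q <= m by lia.
case: Hh => [[Hi Hh]|[c [Hi Hh]]].
- exists q, (act (Pad false Hq) w), (MkHom (@box_degen q.+1 q i erefl ltac:(lia))).
  split=> //; split; last by left; exists i; split=> //; lia.
  rewrite -(pad_take false Hk Hk x) E -!act_comp; apply: act_ext => p /=; rewrite Hh; ptq.
- case: (ltnP i q) => Hiq.
  + exists q, (act (Pad c Hq) w), (MkHom (@box_conn q.+1 q i c erefl Hiq)).
    split=> //; split; last by right; exists i, c.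
    rewrite -(pad_take c Hk Hk x) E -!act_comp; apply: act_ext => p /=; rewrite Hh; ptq.
  + have Eiq : i = q by lia. subst i.
    exists q, (act (Pad c Hq) w), (MkHom (@box_degen q.+1 q q erefl (leqnn q))).
    split=> //; split; last by left; exists q.
    rewrite -(pad_take c Hk Hk x) E -!act_comp; apply: act_ext => p /=; rewrite Hh; ptq.
Qed.

Lemma drop_elem_at_degenerate (Y : cset) k l n m (e : k + l = n) (y : cell Y l) (w : cell Y m)
    (h : Hom n m) i :
  k <= i -> elem_at h i -> act (Drop e) y = act h w -> degenerate y.
Proof.
move=> Hki [En Hh] E.
case: l e y E Hh => [|q] e y E Hh.
  by exfalso; case: Hh => [[Hi _]|[c [Hi _]]]; lia.
have Hq : k + q = m by lia.
case: Hh => [[Hi Hh]|[c [Hi Hh]]].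
- exists q, (act (Shift Hq) w), (MkHom (@box_degen q.+1 q (i - k) erefl ltac:(lia))).
  split=> //; split; last by left; exists (i - k); split=> //; lia.
  rewrite -(shift_drop e e y) E -!act_comp; apply: act_ext => p /=; rewrite Hh; ptq.
- exists q, (act (Shift Hq) w), (MkHom (@box_conn q.+1 q (i - k) c erefl ltac:(lia))).
  split=> //; split; last by right; exists (i - k), c; split=> //; lia.
  rewrite -(shift_drop e e y) E -!act_comp; apply: act_ext => p /=; rewrite Hh; ptq.
Qed.

Section TensorUniqueness.
Variables (X Y : cset) (P : gprod X Y).

Lemma tens_inj k l n (e e' : k + l = n) (x x' : cell X k) (y y' : cell Y l) :
  tens P e x y = tens P e' x' y' -> x = x' /\ y = y'.
Proof.
case: (tensor_projection P) => u Hu E.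
have H1 : k <= n by lia.
move: (f_equal (u n) E); rewrite !(Hu _ _ _ _ _ _ H1 e) => [[E1 E2]].
split; [by rewrite -(pad_take false H1 H1 x) E1 pad_take
       | by rewrite -(shift_drop e e y) E2 shift_drop].
Qed.

Lemma tens_dim k l k' l' n (e : k + l = n) (e' : k' + l' = n) (x : cell X k) (y : cell Y l)
   (x' : cell X k') (y' : cell Y l') :
  ~ degenerate x' -> ~ degenerate y' -> tens P e x y = tens P e' x' y' -> k = k'.
Proof.
move=> ndx' ndy' E.
case: (tensor_projection P) => u Hu.
have H1 : k <= n by lia. have H1' : k' <= n by lia.
move: (f_equal (u n) E); rewrite (Hu _ _ _ _ _ _ H1 e) (Hu _ _ _ _ _ _ H1' e') => [[E1 E2]].
case: (ltngtP k k') => // Hk; exfalso.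
- apply: ndx'; case: k' x' e' H1' E E1 E2 Hk => [|q] x' e' H1' E E1 E2 Hk; first by lia.
  have Hkq : k <= q by lia.
  exists q, (act (MkHom (box_take Hkq)) x), (MkHom (@box_degen q.+1 q q erefl (leqnn q))).
  split=> //; split; last by left; exists q.
  by rewrite -(pad_take false H1' H1' x') -E1 -!act_comp; apply: act_ext => p /=; ptq.
- apply: ndy'; case: l' y' e' E E2 => [|q] y' e' E E2; first by lia.
  have Hkq : (k - k'.+1) + l = q by lia.
  exists q, (act (MkHom (box_drop Hkq)) y), (MkHom (@box_degen q.+1 q 0 erefl (leq0n q))).
  split=> //; split; last by left; exists 0.
  by rewrite -(shift_drop e' e' y') -E2 -!act_comp; apply: act_ext => p /=; ptq.
Qed.

Lemma nd_tensor_nondegenerate n (z : cell P n) : nd_tensor z -> ~ degenerate z.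
Proof.
case=> k [l [e [x [y [ndx [ndy Ez]]]]]] /degenerate_elem_at [m [w [h [i [Ew Hh]]]]].
case: (tensor_projection P) => u Hu.
have H1 : k <= n by lia.
have := Hu _ _ _ e x y H1 e; rewrite -Ez Ew (cm_nat u) /= /pact => -[E1 E2].
case: (ltnP i k) => Hik.
- exact: ndx (take_elem_at_degenerate Hik Hh (esym E1)).
- exact: ndy (drop_elem_at_degenerate Hik Hh (esym E2)).
Qed.
Lemma tens_nondegenerate k l n (e : k + l = n) (x : cell X k) (y : cell Y l) :
  ~ degenerate x -> ~ degenerate y -> ~ degenerate (tens P e x y).
Proof. by move=> ndx ndy; apply: nd_tensor_nondegenerate; exists k, l, e, x, y. Qed.
End TensorUniqueness.

Definition gray_rule (o : gray) (k l : nat) (mx my : Prop) : Prop :=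
  match o with
  | LaxG => mx \/ my
  | PseudoG => ~ ((k = 0 /\ ~ my) \/ (~ mx /\ l = 0))
  end.

Lemma gray_rule_mono o k l (mx my mx' my' : Prop) :
  (mx -> mx') -> (my -> my') -> gray_rule o k l mx my -> gray_rule o k l mx' my'.
Proof.
case: o => /= Hx Hy; first by case=> [/Hx|/Hy]; [left|right].
move=> H [[k0 ny']|[nx' l0]]; apply: H; [left|right]; split=> //.
- by move/Hy.
- by move/Hx.
Qed.

(* A marked tensor is marked on account of one factor alone (a marked cube
   has positive dimension). *)
Lemma gray_rule_split o k l (mx my : Prop) : (mx -> 0 < k) ->
  gray_rule o k l mx my -> gray_rule o k l mx False \/ gray_rule o k l False my.
Proof.
case: o => /= Hk; first by case=> ?; [left; left | right; right].
move=> H; case: (classic mx) => Mx; [left|right].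
- case=> [[k0 _]|[nx _]]; [by have := Hk Mx; rewrite k0 | exact: nx Mx].
- case=> [[k0 ny]|[_ l0]]; apply: H; [left | right]; split=> //.
Qed.

Section GrayMarking.
Variables (o : gray) (X Y : mcset) (P : gprod X Y).

Lemma gmarkedE n (z : cell P n) : gmarked o z <->
  degenerate z \/ exists k l (e : k + l = n) (x : cell X k) (y : cell Y l),
    ~ degenerate x /\ ~ degenerate y /\ z = tens P e x y /\ gray_rule o k l (marked x) (marked y).
Proof. by case: o. Qed.

Lemma gmarked_tensE k l n (e : k + l = n) (x : cell X k) (y : cell Y l) :
  ~ degenerate x -> ~ degenerate y ->
  gmarked o (tens P e x y) <-> gray_rule o k l (marked x) (marked y).
Proof.
move=> ndx ndy; rewrite gmarkedE; split; last by move=> H; right; exists k, l, e, x, y.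
case=> [Hd|[k' [l' [e' [x' [y' [ndx' [ndy' [E H]]]]]]]]].
  by case: (tens_nondegenerate (P := P) (e := e) ndx ndy Hd).
have Ek := tens_dim ndx' ndy' E; subst k'.
have El : l' = l by lia. subst l'.
by case: (tens_inj E) => -> ->.
Qed.
End GrayMarking.

Lemma ccomp_nat (X Y Z : cset) (g : cmap Y Z) (f : cmap X Y) m n (phi : Hom m n) (x : cell X n) :
  g m (f m (act phi x)) = act phi (g n (f n x)).
Proof. by rewrite !cm_nat. Qed.

Definition ccomp (X Y Z : cset) (g : cmap Y Z) (f : cmap X Y) : cmap X Z :=
  @CMap X Z (fun n x => g n (f n x)) (ccomp_nat g f).

Definition cinv (X Y : cset) (f : cmap X Y) (v : cmap Y X) : Prop :=
  (forall n x, v n (f n x) = x) /\ (forall n y, f n (v n y) = y).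

Lemma cmap_degenerate (X Y : cset) (f : cmap X Y) n (x : cell X n) :
  degenerate x -> degenerate (f n x).
Proof.
case=> m [y [h [En [Ex Hh]]]]; exists m, (f m y), h.
by split=> //; split=> //; rewrite Ex cm_nat.
Qed.

Lemma section_nondegenerate (X Y : cset) (f : cmap X Y) (v : cmap Y X) n (y : cell Y n) :
  f n (v n y) = y -> ~ degenerate y -> ~ degenerate (v n y).
Proof. by move=> E ny /(cmap_degenerate f); rewrite E. Qed.

(* Injective maps reflect degeneracy: a degeneracy or connection has a face as section. *)
Lemma inj_reflects_degenerate (X Y : cset) (f : cmap X Y) :
  (forall n (a b : cell X n), f n a = f n b -> a = b) ->
  forall n (x : cell X n), degenerate (f n x) -> degenerate x.
Proof.
move=> Hinj n x [m [y [h [En [Ex Hh]]]]].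
have [s Hs] : exists s : Hom m n, forall p, hfun h (hfun s p) = p.
  case: Hh => [[i [Hi Hh]]|[i [e [Hi Hh]]]].
  - exists (MkHom (@box_face m n i false En Hi)) => p /=; rewrite Hh; subst n; ptx.
  - exists (MkHom (@box_face m n i (~~ e) En (ltnW Hi))) => p /=; rewrite Hh; subst n; ptx;
    case: e {Hh} => //=; rewrite ?orbF ?andbT ?orFb ?andTb; fin.
have Ey : y = f m (act s x).
  by rewrite cm_nat Ex -act_comp -{1}(act_id y); apply: act_ext => p /=; rewrite Hs.
exists m, (act s x), h; split=> //; split=> //.
by apply: Hinj; rewrite cm_nat -Ey.
Qed.

Lemma tensor_map_exists (A B X Y : cset) (f : cmap A X) (g : cmap B Y) (P : gprod A B)
    (Q : gprod X Y) : exists u : cmap P Q, tensor_map f g u.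
Proof.
pose s k l (a : cell A k) (b : cell B l) := gpt Q (f k a) (g l b).
have bs : bimor s by move=> k k' l l' phi psi x y; rewrite /s !cm_nat (gpt_bimor Q).
by case: (gp_univ P bs) => w [Hw _]; exists w.
Qed.

Lemma tensor_map_tens (A B X Y : cset) (f : cmap A X) (g : cmap B Y) (P : gprod A B)
    (Q : gprod X Y) (u : cmap P Q) : tensor_map f g u ->
  forall k l n (e : k + l = n) a b, u n (tens P e a b) = tens Q e (f k a) (g l b).
Proof. by move=> H k l n e a b; subst n; exact: H. Qed.

Lemma tensor_map_inverse (A B X Y : cset) (f : cmap A X) (g : cmap B Y) (P : gprod A B)
    (Q : gprod X Y) (u : cmap P Q) (vf : cmap X A) (vg : cmap Y B) :
  tensor_map f g u -> cinv f vf -> cinv g vg -> exists w : cmap Q P, cinv u w.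
Proof.
move=> Hu [f1 f2] [g1 g2].
case: (tensor_map_exists vf vg Q P) => w Hw; exists w; split.
- apply: (gprod_map_ext (u := ccomp w u) (v := idcmap P)) => k l x y /=.
  by rewrite Hu Hw f1 g1.
- apply: (gprod_map_ext (u := ccomp u w) (v := idcmap Q)) => k l x y /=.
  by rewrite Hw Hu f2 g2.
Qed.

Lemma tensor_map_unique (A B X Y : cset) (f : cmap A X) (g : cmap B Y)
    (P : gprod A B) (Q : gprod X Y) (u v : cmap P Q) :
  tensor_map f g u -> tensor_map f g v -> forall n z, u n z = v n z.
Proof. by move=> Hu Hv; apply: gprod_map_ext => k l x y; rewrite Hu Hv. Qed.

Lemma tensor_map_reflects_marks o (A B X Y : mcset) (f : cmap A X) (g : cmap B Y)
    (P : gprod A B) (Q : gprod X Y) (u : mmap (GT o P) (GT o Q)) :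
  tensor_map f g (mmcmap u) ->
  (forall n a b, f n a = f n b -> a = b) -> (forall n a b, g n a = g n b -> a = b) ->
  (forall n a, marked (f n a) -> marked a) -> (forall n b, marked (g n b) -> marked b) ->
  forall n (z : cell (GT o P) n), marked (u n z) -> marked z.
Proof.
move=> Hu injf injg rf rg n z.
case: (gprod_cube_cases z) => [dz|[k [l [e [a [b [nda [ndb ->]]]]]]]] Hm;
  first exact: marked_deg.
have ndfa : ~ degenerate (f k a) by move/(inj_reflects_degenerate injf).
have ndgb : ~ degenerate (g l b) by move/(inj_reflects_degenerate injg).
move: Hm; rewrite (tensor_map_tens Hu) /=.
rewrite (gmarked_tensE _ _ _ ndfa ndgb) (gmarked_tensE _ _ _ nda ndb).
exact: gray_rule_mono (rf _ _) (rg _ _).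
Qed.

Lemma marked_gt0 (X : mcset) n (x : cell X n) : marked x -> 0 < n.
Proof. by case: n x => // x /marked_pos. Qed.

Section Representable.
Variable m : nat.
Lemma rep_id n (phi : Hom n m) : hcomp phi (hid n) = phi. Proof. exact: hom_eq. Qed.
Lemma rep_comp a b c (f : Hom a b) (g : Hom b c) (phi : Hom c m) :
  hcomp phi (hcomp g f) = hcomp (hcomp phi g) f. Proof. exact: hom_eq. Qed.
Definition Rep : cset := @CSet (fun n => Hom n m) (fun a b f phi => hcomp phi f) rep_id rep_comp.
Lemma rep_pos (x : cell Rep 0) : ~ degenerate x.
Proof. by case=> q [_ [_ [E _]]]. Qed.
Definition RepM : mcset := @MCSet Rep (@degenerate Rep) rep_pos (fun n x H => H).
End Representable.

Definition yoneda (A : mcset) m (a : cell A m) : mmap (RepM m) A.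
Proof.
refine (@MMap (RepM m) A
  (@CMap (Rep m) A (fun n phi => act phi a) (fun p n f phi => act_comp f phi a)) _).
move=> n phi [q [psi [h [En [Ep Hh]]]]] /=.
apply: marked_deg; exists q, (act psi a), h; split=> //; split=> //.
by rewrite Ep /= act_comp.
Defined.

Lemma mono_injective (A X : mcset) (f : mmap A X) :
  mono f -> forall n (a b : cell A n), f n a = f n b -> a = b.
Proof.
move=> Hf m a b E.
have := Hf (RepM m) (yoneda a) (yoneda b) _ m (hid m); rewrite /= !act_id; apply.
by move=> n phi /=; rewrite !cm_nat E.
Qed.

Section MaxMarking.
Variable C : cset.
Lemma maxmark_pos (x : cell C 0) : ~ (0 < 0). Proof. by []. Qed.
Lemma maxmark_deg n (x : cell C n) : degenerate x -> 0 < n.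
Proof. by case=> m [_ [_ [E _]]]; rewrite E. Qed.
Definition maxmark : mcset := @MCSet C (fun n _ => 0 < n) maxmark_pos maxmark_deg.
Definition to_maxmark (X : mcset) (u : cmap X C) : mmap X maxmark :=
  @MMap X maxmark u (fun n x H => marked_gt0 H).
End MaxMarking.

Section Pushouts.
Variables (S B C P : mcset) (f : mmap S B) (g : mmap S C) (i : mmap B P) (j : mmap C P).
Hypothesis HP : is_pushout f g i j.

Lemma pushout_ext (Z : cset) (v1 v2 : cmap P Z) :
  (forall n b, v1 n (i n b) = v2 n (i n b)) -> (forall n c, v1 n (j n c) = v2 n (j n c)) ->
  forall n p, v1 n p = v2 n p.
Proof.
move=> Ei Ej n p; case: HP => comm univ.
case: (univ (maxmark Z) (to_maxmark (ccomp v2 i)) (to_maxmark (ccomp v2 j))) =>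
  [m a|u [_ [_ Hu]]]; first by rewrite /= comm.
by rewrite (Hu (to_maxmark v1)) ?(Hu (to_maxmark v2)) //= => m x; rewrite ?Ei ?Ej.
Qed.

Definition from_legs n (p : cell P n) : Prop := (exists b, p = i n b) \/ (exists c, p = j n c).

Lemma pushout_jointly_surjective n (p : cell P n) : from_legs p.
Proof.
apply: (generating_all (Ip := @from_legs)).
  by move=> m k phi q [[b ->]|[c ->]]; [left; exists (act phi b) | right; exists (act phi c)];
    rewrite cm_nat.
move=> Z v1 v2 E; apply: pushout_ext => m x; apply: E; by [left; exists x | right; exists x].
Qed.
End Pushouts.

Lemma pushout_sym (S B C P : mcset) (f : mmap S B) (g : mmap S C) (i : mmap B P) (j : mmap C P) :
  is_pushout f g i j -> is_pushout g f j i.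
Proof.
case=> comm univ; split=> [n a|Z h k Hhk]; first by rewrite comm.
case: (univ Z k h) => [n a|u [U1 [U2 U3]]]; first by rewrite Hhk.
by exists u; split=> //; split=> // u' H1 H2; exact: U3.
Qed.

Lemma pushout_inverse (S B C P T : mcset) (f : mmap S B) (g : mmap S C) (i : mmap B P)
    (j : mmap C P) (h : mmap P T) (p : mmap B T) (q : mmap C T) :
  is_pushout f g i j -> (forall n b, h n (i n b) = p n b) -> (forall n c, h n (j n c) = q n c) ->
  (exists v : cmap B S, cinv f v) -> (exists w : cmap T C, cinv q w) ->
  exists H : cmap T P, cinv h H.
Proof.
move=> HP Hi Hj [v [v1 v2]] [w [w1 w2]].
exists (ccomp j w); split=> /=; last by move=> n y; rewrite Hj w2.
apply: (pushout_ext HP (v1 := ccomp (ccomp j w) h) (v2 := idcmap P)) => n x /=.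
- case: HP => comm _.
  rewrite Hi -{2}(v2 n x) comm; congr (j n _).
  by rewrite -(w1 n (g n (v n x))) -Hj -comm v2 Hi.
- by rewrite Hj w1.
Qed.

Lemma lift_marked_right o (X B Y : mcset) (g : cmap B Y) (vg : cmap Y B)
    (PXB : gprod X B) (PXY : gprod X Y) (Xg : cmap PXB PXY) :
  tensor_map (idcmap X) g Xg -> (forall n y, g n (vg n y) = y) ->
  forall k l n (e : k + l = n) (x : cell X k) (y : cell Y l),
    ~ degenerate x -> ~ degenerate y -> gray_rule o k l (marked x) False ->
    exists b : cell (GT o PXB) n, marked b /\ Xg n b = tens PXY e x y.
Proof.
move=> tXg vg2 k l n e x y ndx ndy Hr; exists (tens PXB e x (vg l y)); split.
  apply/(gmarked_tensE _ _ _ ndx (section_nondegenerate (vg2 _ y) ndy)).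
  exact: gray_rule_mono Hr.
by rewrite (tensor_map_tens tXg) /= vg2.
Qed.

Lemma lift_marked_left o (A X Y : mcset) (f : cmap A X) (vf : cmap X A)
    (PAY : gprod A Y) (PXY : gprod X Y) (fY : cmap PAY PXY) :
  tensor_map f (idcmap Y) fY -> (forall n x, f n (vf n x) = x) ->
  forall k l n (e : k + l = n) (x : cell X k) (y : cell Y l),
    ~ degenerate x -> ~ degenerate y -> gray_rule o k l False (marked y) ->
    exists c : cell (GT o PAY) n, marked c /\ fY n c = tens PXY e x y.
Proof.
move=> tfY vf2 k l n e x y ndx ndy Hr; exists (tens PAY e (vf k x) y); split.
  apply/(gmarked_tensE _ _ _ (section_nondegenerate (vf2 _ x) ndx) ndy).
  exact: gray_rule_mono Hr.
by rewrite (tensor_map_tens tfY) /= vf2.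
Qed.

Section Leibniz.
Variables (A B X Y : mcset) (f : mmap A X) (g : mmap B Y)
  (PAB : gprod A B) (PXB : gprod X B) (PAY : gprod A Y) (PXY : gprod X Y).

Lemma leibniz_regular o (P : mcset) (i : mmap (GT o PXB) P) (j : mmap (GT o PAY) P)
    (h : mmap P (GT o PXY)) :
  mono f -> mono g -> leibniz o f g PAB PXB PAY PXY i j h ->
  regular f -> regular g -> regular h.
Proof.
move=> mf mg [fB [Ag [Xg [fY [_ [_ [tXg [tfY [HP [Hi Hj]]]]]]]]]] rf rg n z.
split; first exact: mm_marked.
case: (pushout_jointly_surjective HP z) => [[b ->]|[c ->]].
- rewrite Hi => Hm; apply: mm_marked; move: Hm.
  apply: (tensor_map_reflects_marks tXg) => //.
  + exact: (mono_injective mg).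
  + by move=> m b0 /rg.
- rewrite Hj => Hm; apply: mm_marked; move: Hm.
  apply: (tensor_map_reflects_marks tfY) => //.
  + exact: (mono_injective mf).
  + by move=> m a0 /rf.
Qed.

Lemma leibniz_entire o (P : mcset) (i : mmap (GT o PXB) P) (j : mmap (GT o PAY) P)
    (h : mmap P (GT o PXY)) :
  leibniz o f g PAB PXB PAY PXY i j h -> entire f \/ entire g -> entire h.
Proof.
move=> [fB [Ag [Xg [fY [tfB [tAg [tXg [tfY [HP [Hi Hj]]]]]]]]]] [[v Hv]|[v Hv]].
- have idB : cinv (idcmap B) (idcmap B) by [].
  have idY : cinv (idcmap Y) (idcmap Y) by [].
  apply: (pushout_inverse HP Hi Hj).
  + exact: tensor_map_inverse tfB Hv idB.
  + exact: tensor_map_inverse tfY Hv idY.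
- have idA : cinv (idcmap A) (idcmap A) by [].
  have idX : cinv (idcmap X) (idcmap X) by [].
  apply: (pushout_inverse (pushout_sym HP) Hj Hi).
  + exact: tensor_map_inverse tAg idA Hv.
  + exact: tensor_map_inverse tXg idX Hv.
Qed.

(* Part (3): if both are entire, the inverse of the Leibniz product
   preserves markings, since each marked cube of X (.) Y is the image of a
   marked cube of X (.) B or of A (.) Y. *)
Lemma leibniz_iso o (P : mcset) (i : mmap (GT o PXB) P) (j : mmap (GT o PAY) P)
    (h : mmap P (GT o PXY)) :
  leibniz o f g PAB PXB PAY PXY i j h -> entire f -> entire g -> iso h.
Proof.
move=> L ef eg; case: (leibniz_entire L (or_introl ef)) => H [H1 H2].
case: ef eg => vf [_ vf2] [vg [_ vg2]].
case: L => [fB [Ag [Xg [fY [_ [_ [tXg [tfY [_ [Hi Hj]]]]]]]]]].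
suff HM : forall n (w : cell (GT o PXY) n), marked w -> marked (H n w) by exists (MMap HM).
move=> n w /gmarkedE [Hd|[k [l [e [x [y [ndx [ndy [-> Hr]]]]]]]]].
  by apply: marked_deg; exact: cmap_degenerate.
case: (gray_rule_split (@marked_gt0 X k x) Hr) => Hr'.
- have [b [Mb <-]] := lift_marked_right tXg vg2 e ndx ndy Hr'.
  by rewrite -Hi H1; exact: mm_marked.
- have [c [Mc <-]] := lift_marked_left tfY vf2 e ndx ndy Hr'.
  by rewrite -Hj H1; exact: mm_marked.
Qed.

(* A map out of the lax tensor X (x) Y that becomes marked after composing
   with the pseudo Leibniz map also preserves the pseudo markings, when f or
   g is entire: a cube marked in the pseudo but not in the lax tensor has
   unmarked factors, and so lifts to a marked cube of the pseudo tensor of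
   A and Y (f entire) or of X and B (g entire). *)
Lemma pseudo_marks_extend (Pp : mcset) (ip : mmap (Pseudo PXB) Pp) (jp : mmap (Pseudo PAY) Pp)
    (hp : mmap Pp (Pseudo PXY)) (Xg : cmap PXB PXY) (fY : cmap PAY PXY) :
  tensor_map (idcmap X) g Xg -> tensor_map f (idcmap Y) fY ->
  (forall n b, hp n (ip n b) = Xg n b) -> (forall n c, hp n (jp n c) = fY n c) ->
  entire f \/ entire g ->
  forall (Z : mcset) (k' : mmap (Lax PXY) Z),
    (forall n (p : cell Pp n), marked p -> marked (k' n (hp n p))) ->
    forall n (w : cell (Pseudo PXY) n), marked w -> marked (k' n w).
Proof.
move=> tXg tfY Hi Hj ent Z k' Hk n w Hm.
case: (classic (lax_marked w)) => Hl; first exact: (mm_marked k' Hl).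
case/gmarkedE: Hm => [Hd|[k [l [e [x [y [ndx [ndy [Ew Hr]]]]]]]]]; first by case: Hl; left.
have [nx ny] : ~ marked x /\ ~ marked y.
  by split=> M; apply: Hl; rewrite Ew; apply/(gmarked_tensE LaxG _ _ ndx ndy); [left|right].
case: ent => [[vf [_ vf2]]|[vg [_ vg2]]].
- have Hr' : gray_rule PseudoG k l False (marked y) by apply: gray_rule_mono Hr.
  have [c [Mc Ec]] := lift_marked_left tfY vf2 e ndx ndy Hr'.
  by rewrite Ew -Ec -Hj; exact: Hk (mm_marked jp Mc).
- have Hr' : gray_rule PseudoG k l (marked x) False by apply: gray_rule_mono Hr.
  have [b [Mb Eb]] := lift_marked_right tXg vg2 e ndx ndy Hr'.
  by rewrite Ew -Eb -Hi; exact: Hk (mm_marked ip Mb).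
Qed.

(* On underlying cubical sets the
   induced map is forced to be k' itself, which preserves the pseudo
   markings by [pseudo_marks_extend]. *)
Lemma leibniz_mu_pushout (Pl : mcset) (il : mmap (Lax PXB) Pl) (jl : mmap (Lax PAY) Pl)
    (hl : mmap Pl (Lax PXY)) (Pp : mcset) (ip : mmap (Pseudo PXB) Pp)
    (jp : mmap (Pseudo PAY) Pp) (hp : mmap Pp (Pseudo PXY)) (top : mmap Pl Pp) :
  leibniz LaxG f g PAB PXB PAY PXY il jl hl ->
  leibniz PseudoG f g PAB PXB PAY PXY ip jp hp ->
  (forall n (b : cell (Lax PXB) n), top n (il n b) = ip n (mu PXB n b)) ->
  (forall n (c : cell (Lax PAY) n), top n (jl n c) = jp n (mu PAY n c)) ->
  entire f \/ entire g -> is_pushout top hl hp (mu PXY).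
Proof.
move=> [fBl [Agl [Xgl [fYl [_ [_ [tXgl [tfYl [HPl [Hil Hjl]]]]]]]]]]
       [fBp [Agp [Xgp [fYp [_ [_ [tXgp [tfYp [HPp [Hip Hjp]]]]]]]]]] Ti Tj ent.
have EX := tensor_map_unique tXgp tXgl; have EY := tensor_map_unique tfYp tfYl.
split.
  apply: (pushout_ext HPl (v1 := ccomp hp top) (v2 := mmcmap hl)) => n b /=.
  - by rewrite Ti Hil Hip EX.
  - by rewrite Tj Hjl Hjp EY.
move=> Z h' k' Hhk.
have E : forall n p, h' n p = k' n (hp n p).
  apply: (pushout_ext HPp (v1 := mmcmap h') (v2 := ccomp k' hp)) => n b /=.
  - by rewrite Hip EX; have := Ti n b => /= <-; rewrite Hhk Hil.
  - by rewrite Hjp EY; have := Tj n b => /= <-; rewrite Hhk Hjl.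
have marks : forall n (w : cell (Pseudo PXY) n), marked w -> marked (k' n w).
  apply: (pseudo_marks_extend tXgp tfYp Hip Hjp ent) => n p Mp.
  by rewrite -E; exact: mm_marked.
exists (@MMap (Pseudo PXY) Z (mmcmap k') marks); split; first by move=> n b /=; rewrite E.
by split=> // u' _ Hu' n p; exact: Hu'.
Qed.
End Leibniz.

Theorem lemma2p11 (A B X Y : mcset) (f : mmap A X) (g : mmap B Y)
  (PAB : gprod A B) (PXB : gprod X B) (PAY : gprod A Y) (PXY : gprod X Y) :
  mono f -> mono g ->
  (* parts (1)-(3), for o = lax or pseudo Gray tensor *)
  (forall (o : gray) (P : mcset) (i : mmap (GT o PXB) P) (j : mmap (GT o PAY) P)
          (h : mmap P (GT o PXY)),
     leibniz o f g PAB PXB PAY PXY i j h ->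
     (regular f -> regular g -> regular h) /\
     (entire f \/ entire g -> entire h) /\
     (entire f -> entire g -> iso h)) /\
  (* part (4) *)
  (forall (Pl : mcset) (il : mmap (Lax PXB) Pl) (jl : mmap (Lax PAY) Pl)
          (hl : mmap Pl (Lax PXY))
          (Pp : mcset) (ip : mmap (Pseudo PXB) Pp) (jp : mmap (Pseudo PAY) Pp)
          (hp : mmap Pp (Pseudo PXY)) (top : mmap Pl Pp),
     leibniz LaxG f g PAB PXB PAY PXY il jl hl ->
     leibniz PseudoG f g PAB PXB PAY PXY ip jp hp ->
     (forall n (b : cell (Lax PXB) n), top n (il n b) = ip n (mu PXB n b)) ->
     (forall n (c : cell (Lax PAY) n), top n (jl n c) = jp n (mu PAY n c)) ->
     entire f \/ entire g ->
     is_pushout top hl hp (mu PXY)).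
Proof.
move=> mf mg; split.
- move=> o P i j h L; split; first exact: leibniz_regular mf mg L.
  split; [exact: leibniz_entire L | exact: leibniz_iso L].
- exact: leibniz_mu_pushout.
Qed.
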